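(* Let $R,T$ be finite disjoint sets with $R\ne\emptyset$ and $|R\sqcup T|\ge3$, and let $c$ be a metric cost function on $R\sqcup T$ which is injective on the edge set $E$ of the robot-task graph $G$ (i.e. $c(\{x,y\})\ne c(\{x',y'\})$ for distinct edges). Then $C(\textsc{Assign}(\mathcal{M}))\le 2\,C(\textsc{MinSum}(\mathcal{M}))$.
   Context: A metric cost function $c:(R\sqcup T)\times(R\sqcup T)\to\mathbb{R}_+$ satisfies $c(x,y)\ge0$, $c(x,y)=0$ iff $x=y$, $c(x,y)=c(y,x)$ and $c(x,z)\le c(x,y)+c(y,z)$. The robot-task graph $G$ has vertex set $R\sqcup T$, edge set $E$ consisting of all 2-element subsets of $R\sqcup T$, with edge cost $c(\{x,y\})=c(x,y)$. For a list $P=(v_0,\dots,v_n)$ of vertices, its cost is $C(P)=\sum_{i=0}^{n-1}c(v_i,v_{i+1})$ (and $0$ if $n=0$). A robot-route is such a list with $v_0\in R$ and $v_j\in T$ for $j\ge1$. A plan is a family of $|R|$ robot-routes whose vertex sets partition $R\sqcup T$; its cost is the sum of the costs of its routes. $\textsc{MinSum}(\mathcal{M})$ denotes a plan of minimum cost. $\textsc{Auction}(\mathcal{M})$: set $A=\emptyset$ and $a(r)=0$ for all $r\in R$. For $k=1,\dots,|T|$: let $w_k=\{s,t\}$ be the edge with $s\in R\cup A$, $t\in T\setminus A$ minimising $c(s,t)$ (unique by injectivity); set $a(t)=k$ and $A\leftarrow A\cup\{t\}$. Output the list $W=(w_1,\dots,w_{|T|})$ and the function $a:R\sqcup T\to\{0,\dots,|T|\}$.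 $\textsc{DFShortcut}$: the edges of $W$ form a forest each of whose components contains exactly one robot. For each robot $r$ let $V(r)$ be the vertex set of its component; start with $P(r)=(r)$ and, while $P(r)$ does not contain all of $V(r)$, scan the vertices of $P(r)$ from last to first, and at the first vertex $t$ having a neighbour (via an edge of $W$) not yet in $P(r)$, append the such neighbour $s$ with smallest $a(s)$. Output the plan $\{P(r):r\in R\}$. $\textsc{Assign}(\mathcal{M})$ is the plan obtained by applying $\textsc{DFShortcut}$ to the output $(W,a)$ of $\textsc{Auction}(\mathcal{M})$. *)

From mathcomp Require Import all_boot all_order all_algebra.
Set Implicit Arguments. Unset Strict Implicit. Unset Printing Implicit Defensive.
Import Order.TTheory GRing.Theory Num.Theory.
Local Open Scope ring_scope.

(* Vertex set R ⊔ T is a finType V; robots are the v with isR v, tasks the others. *)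
Section Defs.
Variables (V : finType) (isR : pred V) (K : realFieldType) (c : V -> V -> K).

Definition metric_cost : Prop :=
  [/\ forall x y, 0 <= c x y,
      forall x y, c x y = 0 <-> x = y,
      forall x y, c x y = c y x
    & forall x y z, c x z <= c x y + c y z].

Definition edge_injective : Prop :=
  forall x y x' y', x != y -> x' != y' -> c x y = c x' y' ->
    (x = x' /\ y = y') \/ (x = y' /\ y = x').

Fixpoint list_cost (s : seq V) : K :=
  match s with
  | x :: ((y :: _) as s') => c x y + list_cost s'
  | _ => 0
  end.

Definition robot_route (P : seq V) : Prop :=
  exists r ts, P = r :: ts /\ isR r /\ all (fun t => ~~ isR t) ts.

Definition is_plan (Q : V -> seq V) : Prop :=
  (forall r, isR r -> robot_route (Q r)) /\
  (forall v, exists r, [/\ isR r, v \in Q r &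
        forall r', isR r' -> v \in Q r' -> r' = r]).

Definition plan_cost (Q : V -> seq V) : K := \sum_(r | isR r) list_cost (Q r).

(* W is stored as a list of pairs (s,t), w_k = {s,t}; A = tasks in W. *)
Definition assigned (W : seq (V * V)) : seq V := map snd W.

Definition auction_cand (W : seq (V * V)) (p : V * V) : bool :=
  [&& (isR p.1 || (p.1 \in assigned W)), ~~ isR p.2 & p.2 \notin assigned W].

Definition auction_step (W : seq (V * V)) : seq (V * V) :=
  match [pick p | auction_cand W p &&
           [forall q, auction_cand W q ==> (c p.1 p.2 <= c q.1 q.2)]] with
  | Some p => rcons W p
  | None => W
  end.

Definition auction_W : seq (V * V) := iter #|[pred v | ~~ isR v]| auction_step [::].

(* a(t) = k if t was assigned at step k; a = 0 on robots *)
Definition auction_a (v : V) : nat :=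
  if v \in assigned auction_W then (index v (assigned auction_W)).+1 else 0%N.

Definition Wadj (W : seq (V * V)) (x y : V) : bool := ((x, y) \in W) || ((y, x) \in W).

Definition dfs_step (W : seq (V * V)) (a : V -> nat) (r : V) (P : seq V) : seq V :=
  if [set v | connect (Wadj W) r v] \subset [set v in P] then P else
  match [seq t <- rev P | [exists s, Wadj W t s && (s \notin P)]] with
  | t :: _ =>
      match [pick s | [&& Wadj W t s, s \notin P &
              [forall s', (Wadj W t s' && (s' \notin P)) ==> (a s <= a s')%N]]] with
      | Some s => rcons P s
      | None => P
      end
  | [::] => P
  end.

Definition dfshortcut (W : seq (V * V)) (a : V -> nat) (r : V) : seq V :=
  iter #|V| (dfs_step W a r) [:: r].

Definition assign_plan : V -> seq V := dfshortcut auction_W auction_a.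

End Defs.

(* Cutting every route of a plan Q into its consecutive edges gives an edge
   list F0 of cost C(Q) along which every vertex reaches a robot.  The auction
   is Prim's algorithm with all robots contracted into one root, so the usual
   exchange argument gives c(W) <= c(F0) for its forest W: the edge by which a
   path of F0 first enters the current tree is a candidate bid, hence costs no
   less than the edge chosen, and removing it keeps every vertex connected.
   Depth-first shortcutting then walks each tree of W; by the triangle
   inequality the walk plus the current DFS stack never costs more than twice
   the tree edges followed, so each route costs at most twice its tree. *)

From mathcomp Require Import all_boot all_order all_algebra.
From mathcomp Require Import lra.
Set Implicit Arguments. Unset Strict Implicit. Unset Printing Implicit Defensive.
Import Order.TTheory GRing.Theory Num.Theory.
Local Open Scope ring_scope.

Section Reachability.
Variable V : finType.
Implicit Types (F G : seq (V * V)) (S : pred V).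

Inductive reach F S : V -> Prop :=
| reach_here v : S v -> reach F S v
| reach_step v w : ~~ S v -> Wadj F v w -> reach F S w -> reach F S v.

Lemma Wadj_sym F x y : Wadj F x y = Wadj F y x.
Proof. by rewrite /Wadj orbC. Qed.

Lemma Wadj_rem F q x y :
  (x, y) != q -> (y, x) != q -> Wadj F x y -> Wadj (rem q F) x y.
Proof. by move=> xy yx /orP[xyF | yxF]; apply/orP; [left | right]; apply: rem_mem. Qed.

Lemma reach_trans F G S (S' : pred V) v :
  (forall x y, Wadj F x y -> Wadj G x y) -> (forall s, S s -> reach G S' s) ->
  reach F S v -> reach G S' v.
Proof.
move=> FG SS'; elim=> [u Su | u w _ Fuw _ IH]; first exact: SS'.
case S'u: (S' u); first exact: reach_here.
by apply: (reach_step _ (FG _ _ Fuw)) => //; rewrite S'u.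
Qed.

Lemma reach_mono F S (S' : pred V) v :
  (forall s, S s -> S' s) -> reach F S v -> reach F S' v.
Proof. by move=> SS'; apply: reach_trans => // s /SS' /reach_here. Qed.

(* {y, z} is the edge by which a path from x first enters S; without it, y
   still reaches x along the initial part of the path. *)
Lemma reach_entry_edge F S x : reach F S x -> ~~ S x ->
  exists q y z, [/\ q \in F, q = (y, z) \/ q = (z, y), ~~ S y, S z &
                   reach (rem q F) (predU1 x S) y].
Proof.
elim=> [u Su | u w nSu Fuw Rw IH] nSx; first by rewrite Su in nSx.
case Sw: (S w).
  have Ru q : reach (rem q F) (predU1 u S) u by apply: reach_here; rewrite /= eqxx.
  case/orP: Fuw => [uwF | wuF]; first by exists (u, w), u, w; split; [| left | | |].
  by exists (w, u), u, w; split; [| right | | |].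
have [q [y [z [qF qyz nSy Sz Ry]]]] := IH (negbT Sw).
exists q, y, z; split=> //; apply: reach_trans Ry => // s /= /orP[/eqP -> | Ss].
  case: (boolP (predU1 u S w)) => [Uw | nUw]; first exact: reach_here.
  apply: (reach_step (w := u) nUw); last by apply: reach_here; rewrite /= eqxx.
  rewrite Wadj_sym; apply: Wadj_rem => //; apply/eqP => wuq; move: qyz;
    rewrite -wuq => -[] [eyw ezu]; subst; by rewrite ?Sw ?(negPf nSu) in Sz.
by apply: reach_here; rewrite /= Ss orbT.
Qed.

Lemma reach_reroute F S x q y z v : q = (y, z) \/ q = (z, y) -> S z ->
  reach (rem q F) (predU1 x S) y -> reach F S v -> reach (rem q F) (predU1 x S) v.
Proof.
move=> qyz Sz Ry; elim=> [u Su | u w nSu Fuw _ IH].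
  by apply: reach_here; rewrite /= Su orbT.
case: (boolP (predU1 x S u)) => [Uu | nUu]; first exact: reach_here.
case: (eqVneq u y) => [-> // | nuy].
have nuz : u != z by apply: contraNneq nSu => ->.
apply: (reach_step nUu _ IH); apply: Wadj_rem => //; apply/eqP => uwq;
  by case: qyz; rewrite -uwq => -[eu ew]; rewrite ?eu ?ew eqxx in nuy nuz.
Qed.

Lemma reach_exchange F S x : (forall v, reach F S v) -> ~~ S x ->
  exists q y z, [/\ q \in F, q = (y, z) \/ q = (z, y), ~~ S y, S z &
                   forall v, reach (rem q F) (predU1 x S) v].
Proof.
move=> RF nSx; have [q [y [z [qF qyz nSy Sz Ry]]]] := reach_entry_edge (RF x) nSx.
by exists q, y, z; split=> // v; apply: reach_reroute qyz Sz Ry (RF v).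
Qed.

Definition walk_edges (s : seq V) : seq (V * V) :=
  if s is x :: s' then pairmap pair x s' else [::].

Lemma reach_walk_edges x s v : v \in x :: s -> reach (walk_edges (x :: s)) (pred1 x) v.
Proof.
elim: s x v => [|y s IH] x v.
  by rewrite mem_seq1 => /eqP ->; apply: reach_here => /=.
rewrite in_cons; case: (eqVneq v x) => [-> _ | nvx /= vys].
  by apply: reach_here => /=.
apply: reach_trans (IH y v vys) => [a b | _ /eqP ->].
  by rewrite /Wadj /= !in_cons => /orP[] ->; rewrite !orbT.
case: (eqVneq y x) => [-> | nyx]; first by apply: reach_here => /=.
apply: (@reach_step _ _ y x) => /=; [exact: nyx | | by apply: reach_here => /=].
by rewrite /Wadj /= !in_cons eqxx !orbT.
Qed.

End Reachability.

Section EdgeCosts.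
Variables (V : finType) (K : realFieldType) (c : V -> V -> K).
Hypothesis c_ge0 : forall x y, 0 <= c x y.
Implicit Types (F E L : seq (V * V)).

Definition edges_cost F : K := \sum_(p <- F) c p.1 p.2.

Lemma list_cost_walk_edges s : list_cost c s = edges_cost (walk_edges s).
Proof.
rewrite /edges_cost; elim: s => [|x [|y s] IH]; rewrite ?big_nil //.
by rewrite [RHS]big_cons -IH.
Qed.

Lemma edges_cost_rcons F p : edges_cost (rcons F p) = edges_cost F + c p.1 p.2.
Proof. by rewrite /edges_cost -cats1 big_cat big_seq1. Qed.

Lemma edges_cost_rem F q : q \in F -> edges_cost F = c q.1 q.2 + edges_cost (rem q F).
Proof. exact: big_rem. Qed.

Lemma edges_cost_ge0 F : 0 <= edges_cost F.
Proof. by apply: sumr_ge0 => p _. Qed.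

Lemma edges_cost_sub E L : uniq E -> {subset E <= L} -> edges_cost E <= edges_cost L.
Proof.
elim: L E => [|w L IH] E uE EL.
  by case: E uE EL => [|e E] // _ /(_ e); rewrite mem_head => /(_ isT).
rewrite /edges_cost big_cons -/(edges_cost L) -/(edges_cost E).
case: (boolP (w \in E)) => [wE | wNE].
  rewrite (edges_cost_rem wE) lerD2l; apply: IH; first exact: rem_uniq.
  move=> e; rewrite (mem_rem_uniq _ uE) inE => /andP[new eE].
  by move: (EL e eE); rewrite in_cons (negPf new).
apply: le_trans (IH E uE _) _; last by rewrite lerDr.
move=> e eE; move: (EL e eE); rewrite in_cons => /orP[/eqP ew | //].
by rewrite -ew eE in wNE.
Qed.

Lemma edges_cost_fibers_le (I : finType) (P : pred I) (lab : V * V -> I) F :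
  \sum_(i | P i) edges_cost [seq p <- F | lab p == i] <= edges_cost F.
Proof.
rewrite /edges_cost; under eq_bigr do rewrite big_filter.
rewrite (exchange_big_dep xpredT) //=; apply: ler_sum => p _.
case: (boolP (P (lab p))) => [Pp | nPp].
  rewrite (big_pred1 (lab p)) // => i /=.
  by rewrite eq_sym; case: eqP => [-> | _]; rewrite ?Pp ?andbF.
by rewrite big_pred0 // => i /=; case: eqP => [<- | _]; rewrite ?(negPf nPp) ?andbF.
Qed.

End EdgeCosts.

Section Auction.
Variables (V : finType) (isR : pred V) (K : realFieldType) (c : V -> V -> K).
Hypothesis c_ge0 : forall x y, 0 <= c x y.
Hypothesis c_sym : forall x y, c x y = c y x.
Implicit Types (W F : seq (V * V)) (p q : V * V).

Local Notation auction n := (iter n (auction_step isR c) [::]).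
Local Notation settled W := [pred u | isR u || (u \in assigned W)].

Variant auction_step_spec W : seq (V * V) -> Prop :=
| AuctionIdle : auction_step_spec W W
| AuctionAssign p of auction_cand isR W p &
    (forall q, auction_cand isR W q -> c p.1 p.2 <= c q.1 q.2) :
    auction_step_spec W (rcons W p).

Lemma auction_stepP W : auction_step_spec W (auction_step isR c W).
Proof.
rewrite /auction_step; case: pickP => [p /andP[candp /forallP minp] | _].
  by apply: AuctionAssign => // q; apply/implyP.
exact: AuctionIdle.
Qed.

Lemma assigned_rcons W p : assigned (rcons W p) = rcons (assigned W) p.2.
Proof. exact: map_rcons. Qed.

Lemma settled_rcons W p u : settled W u -> settled (rcons W p) u.
Proof. by rewrite /= assigned_rcons mem_rcons in_cons => /orP[] ->; rewrite ?orbT. Qed.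

Lemma auction_cand_neq W p : auction_cand isR W p -> p.1 != p.2.
Proof.
by case/and3P=> p1S p2R p2A; apply: contraTneq p1S => ->; rewrite negb_or p2R.
Qed.

Lemma auction_sources n p : p \in auction n -> settled (auction n) p.1.
Proof.
elim: n p => [// | n IH] p; rewrite iterS.
case: auction_stepP => [|q /and3P[q1S _ _] _]; first exact: IH.
rewrite mem_rcons in_cons => /orP[/eqP -> | /IH]; exact: settled_rcons.
Qed.

Lemma auction_component_root n :
  exists2 rho : V -> V, (forall x, isR x -> rho x = x) &
                        (forall p, p \in auction n -> rho p.1 = rho p.2).
Proof.
elim: n => [|n [rho rhoR rhoW]]; first by exists id.
rewrite iterS; case: auction_stepP => [|p candp _]; first by exists rho.
have /and3P[_ p2R p2A] := candp.
have new_p2 q : q \in auction n -> (q.1 != p.2) && (q.2 != p.2).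
  move=> qW; apply/andP; split; apply/eqP => qp.
    by move: (auction_sources qW); rewrite /= qp (negPf p2R) (negPf p2A).
  by move: p2A; rewrite /assigned -qp (map_f snd qW).
exists (fun x => if x == p.2 then rho p.1 else rho x).
  by move=> x xR; case: eqVneq => [xp | _]; [rewrite -xp xR in p2R | exact: rhoR].
move=> q; rewrite mem_rcons in_cons => /orP[/eqP -> | qW] /=.
  by rewrite eqxx (negPf (auction_cand_neq candp)).
by case/andP: (new_p2 q qW) => /negPf -> /negPf ->; exact: rhoW.
Qed.

Lemma auction_exchange F0 : (forall v, reach F0 isR v) -> forall n,
  exists F, edges_cost c (auction n) + edges_cost c F <= edges_cost c F0 /\
            forall v, reach F (settled (auction n)) v.
Proof.
move=> RF0; elim=> [|n [F [costF RF]]].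
  exists F0; split; first by rewrite /edges_cost big_nil add0r.
  by move=> v; apply: reach_mono (RF0 v) => u /= ->.
rewrite iterS; case: auction_stepP => [|p candp minp]; first by exists F.
have /and3P[_ p2R p2A] := candp.
have nSp2 : ~~ settled (auction n) p.2 by rewrite /= negb_or p2R.
have [q [y [z [qF qyz nSy Sz Rq]]]] := reach_exchange RF nSp2.
exists (rem q F); split.
  have /minp cpq : auction_cand isR (auction n) (z, y).
    by move: nSy Sz; rewrite /auction_cand /= negb_or => /andP[-> ->] ->.
  have cq : c q.1 q.2 = c z y by case: qyz => ->; rewrite //= c_sym.
  by move: costF cpq; rewrite edges_cost_rcons (edges_cost_rem _ qF) cq /=; lra.
move=> v; apply: reach_mono (Rq v) => u /= /orP[/eqP -> | Su].
  by rewrite assigned_rcons mem_rcons mem_head orbT.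
exact: settled_rcons.
Qed.

Lemma auction_W_cost_le F0 :
  (forall v, reach F0 isR v) -> edges_cost c (auction_W isR c) <= edges_cost c F0.
Proof.
move=> RF0; have [F [costF _]] := auction_exchange RF0 #|[pred v | ~~ isR v]|.
by apply: le_trans costF; rewrite lerDl edges_cost_ge0.
Qed.

End Auction.

Lemma rev_filter_head_suffix (T : eqType) (a : pred T) (P s1 s2 : seq T) t rest :
  uniq P -> subseq (s1 ++ t :: s2) P -> [seq x <- rev P | a x] = t :: rest ->
  {in s2, forall x, ~~ a x}.
Proof.
move=> uP sP fP.
have tP : t \in P by apply: (mem_subseq sP); rewrite mem_cat mem_head orbT.
case/splitPr: tP uP sP fP => P1 P2 uP.
rewrite uniq_subseq_pivot // => /andP[_ /mem_subseq s2P2].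
have tP2 : t \notin P2 by move: uP; rewrite cat_uniq /= => /and4P[].
rewrite rev_cat rev_cons -cats1 -catA filter_cat.
case E2: [seq x <- rev P2 | a x] => [|y ys] /= fP x xs2; last first.
  case: fP => yt _; have : y \in [seq x <- rev P2 | a x] by rewrite E2 mem_head.
  by rewrite mem_filter mem_rev yt (negPf tP2) andbF.
apply: contraT => /negPn ax.
have : x \in [seq x <- rev P2 | a x] by rewrite mem_filter ax mem_rev s2P2.
by rewrite E2.
Qed.

Section DFShortcut.
Variables (V : finType) (K : realFieldType) (c : V -> V -> K).
Hypothesis c_ge0 : forall x y, 0 <= c x y.
Hypothesis c_refl : forall x, c x x = 0.
Hypothesis c_sym : forall x y, c x y = c y x.
Hypothesis c_tri : forall x y z, c x z <= c x y + c y z.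

Lemma list_cost_ge0 s : 0 <= list_cost c s.
Proof. by elim: s => [|x [|y s] IH] //=; rewrite addr_ge0. Qed.

Lemma list_cost_cons2 x y s : list_cost c [:: x, y & s] = c x y + list_cost c (y :: s).
Proof. by []. Qed.

Lemma list_cost_cat s1 x s2 :
  list_cost c (s1 ++ x :: s2) = list_cost c (rcons s1 x) + list_cost c (x :: s2).
Proof.
elim: s1 => [|y [|z s1] IH]; first by rewrite add0r.
  by rewrite /= addr0.
by rewrite cat_cons rcons_cons !list_cost_cons2 -cat_cons IH addrA.
Qed.

Lemma list_cost_rcons x s v :
  list_cost c (rcons (x :: s) v) = list_cost c (x :: s) + c (last x s) v.
Proof.
elim: s x => [|y s IH] x; first by rewrite /= addr0 add0r.
by rewrite rcons_cons !list_cost_cons2 IH addrA.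
Qed.

Lemma dist_le_list_cost x s : c x (last x s) <= list_cost c (x :: s).
Proof.
elim: s x => [|y s IH] x; first by rewrite c_refl.
by apply: le_trans (c_tri x y _) _; rewrite /= lerD2l IH.
Qed.

(* Going from the end of the walk back to t costs at most the stack segment
   from t to that end. *)
Lemma list_cost_rcons_detour x P t s v : last t s = last x P ->
  list_cost c (rcons (x :: P) v) <= list_cost c (x :: P) + list_cost c (t :: s) + c t v.
Proof.
move=> ends; rewrite list_cost_rcons -ends.
have := c_tri (last t s) t v; have := dist_le_list_cost t s.
by rewrite c_sym; lra.
Qed.

Variables (W : seq (V * V)) (a : V -> nat) (r : V) (rho : V -> V).
Hypothesis rho_W : forall x y, Wadj W x y -> rho x = rho y.
Hypothesis rho_r : rho r = r.

Definition frontier (P : seq V) (x : V) : bool := [exists y, Wadj W x y && (y \notin P)].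

Lemma frontier_rcons P v x : frontier (rcons P v) x -> frontier P x.
Proof.
case/existsP=> y /andP[xy yP]; apply/existsP; exists y.
by rewrite xy; apply: contra yP; rewrite mem_rcons in_cons orbC => ->.
Qed.

(* s is the DFS stack, kept as a subsequence of the walk P, and E lists the
   tree edges followed so far. *)
Inductive dfs_invariant (P : seq V) : Prop :=
  DfsInvariant (s : seq V) (E : seq (V * V)) of
    P = r :: behead P & uniq P & {in P, forall x, rho x = r} &
    subseq s P & last r s = last r P &
    {in P, forall x, x \notin s -> ~~ frontier P x} &
    uniq E & {in E, forall e, [&& e \in W, e.1 \in P & e.2 \in P]} &
    list_cost c P + list_cost c s <= 2 * edges_cost c E.

Lemma dfs_invariant_init : dfs_invariant [:: r].
Proof.
apply: (DfsInvariant (s := [:: r]) (E := [::])) => //.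
- by move=> x; rewrite mem_seq1 => /eqP ->.
- by move=> x ->.
- by rewrite /edges_cost big_nil /= addr0 mulr0.
Qed.

Lemma dfs_invariant_step P : dfs_invariant P -> dfs_invariant (dfs_step W a r P).
Proof.
move=> inv; case: inv (inv) => s E EP uP rhoP sP ls fin uE EinP costP inv.
rewrite /dfs_step; case: ifP => _ //.
case last_frontier: [seq t <- rev P | frontier P t] => [// | t rest].
case: pickP => [v /and3P[tv vP _] | _ //].
have /andP[ft tP] : frontier P t && (t \in P).
  by rewrite -mem_rev -mem_filter last_frontier mem_head.
have ts : t \in s by apply: contraTT ft; apply: fin.
case/splitPr: ts sP ls fin costP => s1 s2 sP ls fin costP.
have s2_explored := rev_filter_head_suffix uP sP last_frontier.
set e := if (t, v) \in W then (t, v) else (v, t).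
have eW : e \in W by rewrite /e; case: ifP => // tvW; move: tv; rewrite /Wadj tvW.
have ce : c e.1 e.2 = c t v by rewrite /e; case: ifP => //= _; rewrite c_sym.
have ev : (e.1 == v) || (e.2 == v) by rewrite /e; case: ifP => _; rewrite eqxx ?orbT.
apply: (DfsInvariant (s := rcons (rcons s1 t) v) (E := rcons E e)).
- by rewrite EP.
- by rewrite rcons_uniq vP.
- move=> x; rewrite mem_rcons in_cons => /orP[/eqP -> | /rhoP //].
  by rewrite -(rho_W tv) rhoP.
- rewrite -!cats1 cat_subseq //; apply: subseq_trans sP.
  by rewrite cats1 -cat_rcons prefix_subseq.
- by rewrite !last_rcons.
- move=> x; rewrite !(mem_rcons, in_cons) => /orP[/eqP -> | xP]; first by rewrite eqxx.
  rewrite !negb_or => /and3P[_ nxt nxs1].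
  apply: contra (@frontier_rcons P v x) _.
  case: (boolP (x \in s1 ++ t :: s2)) => [| xs]; last exact: fin.
  by rewrite mem_cat (negPf nxs1) in_cons (negPf nxt) => /s2_explored.
- rewrite rcons_uniq uE andbT; apply: contra vP => eE.
  by have /and3P[_ e1 e2] := EinP e eE; case/orP: ev => /eqP <-.
- move=> x; rewrite mem_rcons in_cons => /orP[/eqP -> | /EinP /and3P[xW x1 x2]].
    by rewrite eW /e; case: ifP => _; rewrite !(mem_rcons, in_cons) eqxx tP !orbT.
  by rewrite xW !(mem_rcons, in_cons) x1 x2 !orbT.
- have ends : last t s2 = last r (behead P) by move: ls; rewrite last_cat {1}EP.
  have := list_cost_rcons_detour v ends; rewrite -EP.
  have ctv : list_cost c [:: t; v] = c t v by rewrite /= addr0.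
  rewrite edges_cost_rcons ce -[rcons (rcons s1 t) v]cats1 cat_rcons.
  rewrite list_cost_cat ctv.
  by move: costP; rewrite list_cost_cat; lra.
Qed.

Lemma dfshortcut_cost_le :
  list_cost c (dfshortcut W a r) <= 2 * edges_cost c [seq p <- W | rho p.1 == r].
Proof.
have [s E _ _ rhoP _ _ _ uE EinP costP] : dfs_invariant (dfshortcut W a r).
  rewrite /dfshortcut; elim: #|V| => [|n IH]; first exact: dfs_invariant_init.
  by rewrite iterS; apply: dfs_invariant_step.
apply: le_trans (_ : _ <= 2 * edges_cost c E) _.
  by apply: le_trans costP; rewrite lerDl list_cost_ge0.
rewrite ler_pM2l // (edges_cost_sub c_ge0) // => e eE.
by have /and3P[eW e1 _] := EinP e eE; rewrite mem_filter rhoP ?eqxx.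
Qed.

End DFShortcut.

Section Plans.
Variables (V : finType) (isR : pred V) (K : realFieldType) (c : V -> V -> K).
Variable Q : V -> seq V.

Definition plan_edges : seq (V * V) := flatten [seq walk_edges (Q r) | r <- enum isR].

Lemma plan_edges_cost : edges_cost c plan_edges = plan_cost isR c Q.
Proof.
rewrite /edges_cost big_flatten big_map big_enum.
by apply: eq_bigr => r _; rewrite list_cost_walk_edges.
Qed.

Lemma plan_edges_reach : is_plan isR Q -> forall v, reach plan_edges isR v.
Proof.
case=> Qroute Qcover v; have [r [rR vQ _]] := Qcover v.
have [r0 [ts [Qr [r0R _]]]] := Qroute r rR.
have sub : {subset walk_edges (Q r) <= plan_edges}.
  move=> p pQ; apply/flattenP; exists (walk_edges (Q r)) => //.
  by apply: (map_f (fun r => walk_edges (Q r))); rewrite mem_enum.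
rewrite Qr in vQ sub; apply: reach_trans (reach_walk_edges vQ) => [x y | _ /eqP -> //].
  by case/orP=> /sub; rewrite /Wadj => ->; rewrite ?orbT.
exact: reach_here.
Qed.

End Plans.

Lemma assign_plan_cost_le (V : finType) (isR : pred V) (K : realFieldType)
    (c : V -> V -> K) : metric_cost c ->
  plan_cost isR c (assign_plan isR c) <= 2 * edges_cost c (auction_W isR c).
Proof.
case=> c_ge0 c_eq0 c_sym c_tri; have c_refl x : c x x = 0 by apply/c_eq0.
have [rho rhoR rhoW] := auction_component_root isR c #|[pred v | ~~ isR v]|.
have rho_adj x y : Wadj (auction_W isR c) x y -> rho x = rho y.
  by case/orP=> /rhoW /= ->.
apply: le_trans (_ : _ <= \sum_(r | isR r)
                     2 * edges_cost c [seq p <- auction_W isR c | rho p.1 == r]) _.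
  by apply: ler_sum => r rR; apply: dfshortcut_cost_le => //; apply: rhoR.
by rewrite -mulr_sumr ler_pM2l // edges_cost_fibers_le.
Qed.

Theorem lemma5 (V : finType) (isR : pred V) (K : realFieldType) (c : V -> V -> K) :
  (exists r, isR r) -> (3 <= #|V|)%N ->
  metric_cost c -> edge_injective c ->
  forall Q : V -> seq V, is_plan isR Q ->
    plan_cost isR c (assign_plan isR c) <= 2 * plan_cost isR c Q.
Proof.
move=> _ _ c_metric _ Q Qplan; have [c_ge0 _ c_sym _] := c_metric.
apply: le_trans (assign_plan_cost_le isR c_metric) _.
rewrite ler_pM2l // -(plan_edges_cost isR c).
exact/(auction_W_cost_le c_ge0 c_sym)/plan_edges_reach.
Qed.
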